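(* Consider two firms $i\in\{1,2\}$ that simultaneously choose whether to enter a market ($y_i=1$) or not ($y_i=0$), where, when a lump-sum subsidy $\hat\tau\ge0$ is paid to any firm that enters, firm $i$'s profit is $y_i\big[\alpha+\hat\tau+\eta(1-y_{-i})-\mathbf e_i\big]$, with $(\alpha,\eta)\in\mathbb R^2$ and $\mathbf e=(\mathbf e_1,\mathbf e_2)\sim N(0,I_2)$ observed by both firms. Suppose firms behave according to strategic ambiguity aversion (SAA): each firm enters if entering is its unique rationalizable action, and does not enter otherwise (so behavior is rationalizable and no firm enters when both actions are rationalizable for it). Let $P(\hat\tau)$ be the probability (over $\mathbf e$) that neither firm enters. Then there exist a nonempty open set $\Xi\subseteq\mathbb R^2$ and a threshold $\bar\tau>0$ such that if $(\alpha,\eta)\in\Xi$ and $\hat\tau<\bar\tau$, then the probability that the market is not served is increasing in the size of the subsidy, i.e. $P$ is increasing on $[0,\bar\tau)$.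
   Context: Rationalizable actions are those surviving iterated elimination of strictly dominated strategies in the complete-information game with the profits given. *)

From HB Require Import structures.
From mathcomp Require Import all_boot all_order all_algebra.
From mathcomp Require Import all_classical all_reals all_analysis.
Set Implicit Arguments. Unset Strict Implicit. Unset Printing Implicit Defensive.
Import Order.TTheory GRing.Theory Num.Theory.
Local Open Scope classical_set_scope.
Local Open Scope ring_scope.

Section EntryGame.
Context {R : realType}.

Definition profit (alpha eta tau ei : R) (yi yo : bool) : R :=
  if yi then alpha + tau + eta * (1 - (yo : nat)%:R) - ei else 0.

(* Players are indexed by bool: false = firm 1 (shock e.1), true = firm 2 (shock e.2). *)
Definition u (alpha eta tau : R) (e : R * R) (p : bool) (yp yo : bool) : R :=
  profit alpha eta tau (if p then e.2 else e.1) yp yo.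

(* Iterated elimination of strictly dominated strategies.
   [surv k p a] : action a of player p survives k rounds of elimination. *)
Fixpoint surv (alpha eta tau : R) (e : R * R) (k : nat) (p a : bool) : Prop :=
  match k with
  | 0 => True
  | k'.+1 =>
      surv alpha eta tau e k' p a /\
      ~ (exists a', surv alpha eta tau e k' p a' /\
           forall b, surv alpha eta tau e k' (~~ p) b ->
             u alpha eta tau e p a b < u alpha eta tau e p a' b)
  end.

Definition rationalizable (alpha eta tau : R) (e : R * R) (p a : bool) : Prop :=
  forall k, surv alpha eta tau e k p a.

Definition saa_enters (alpha eta tau : R) (e : R * R) (p : bool) : Prop :=
  rationalizable alpha eta tau e p true /\ ~ rationalizable alpha eta tau e p false.

Definition not_served (alpha eta tau : R) : set (R * R) :=
  [set e | ~ saa_enters alpha eta tau e false /\ ~ saa_enters alpha eta tau e true].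

Definition std_normal2 : set (R * R) -> \bar R :=
  ((normal_prob (0:R) 1) \x (normal_prob (0:R) 1))%E.

Definition prob_not_served (alpha eta tau : R) : \bar R :=
  std_normal2 (not_served alpha eta tau).

End EntryGame.

(* Write x = alpha + tau and s = x + eta.  A firm with shock below x enters
   (entering is strictly dominant), one with shock above s stays out (staying
   out is strictly dominant), and a firm with shock in [x, s] enters only if
   its rival is known to stay out.  Hence the market is not served exactly on
   [x, s]^2 u [s, +oo)^2, and P(tau) = B^2 + A^2 with B = Phi[x, s] and
   A = Phi(s, +oo).  Raising tau shifts the window [x, s] to the right: B gains
   the mass D just above s and loses the mass E just above x, while A loses D,
   so P increases as soon as B E < D (2 B - 1).  For alpha near -9 and eta near
   21/2, x lies deep in the left tail (density ratio at most e^-30 between x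
   and s) while B > 1/2, which gives the inequality. *)

From HB Require Import structures.
From mathcomp Require Import all_boot all_order all_algebra.
From mathcomp Require Import all_classical all_reals all_analysis.
From mathcomp Require Import ring lra measurable_realfun.
Import Order.TTheory GRing.Theory Num.Theory.
Import numFieldTopology.Exports.
Local Open Scope classical_set_scope.
Local Open Scope ring_scope.

Section Rationalizability.
Context {R : realType}.
Variables (alpha eta tau : R) (e : R * R).
Local Notation surv := (surv alpha eta tau e).
Local Notation rationalizable := (rationalizable alpha eta tau e).
Local Notation u := (u alpha eta tau e).

Lemma surv_exists k p : exists a, surv k p a.
Proof.
elim: k p => [|k IHk] p; first by exists true.
have [b survb] := IHk (~~ p).
apply: contrapT => nosurv.
have elim_k a : surv k p a -> exists2 a', surv k p a' & u p a b < u p a' b.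
  move=> survka; have /not_andP[//|/contrapT[a' [survka' dom]]] : ~ surv k.+1 p a.
    by move=> surv1; apply: nosurv; exists a.
  by exists a'; last exact: dom.
have other a a' : u p a b < u p a' b -> a' = ~~ a.
  by case: a; case: a' => //; rewrite ltxx.
have [a survka] := IHk p.
have [a' survka' lt1] := elim_k a survka.
have [a'' _ lt2] := elim_k a' survka'.
by move: (lt_trans lt1 lt2); rewrite (other _ _ lt2) (other _ _ lt1) negbK ltxx.
Qed.

Lemma survS k p a : surv k.+1 p a <->
  surv k p a /\ ~ (surv k p (~~ a) /\ forall b, surv k (~~ p) b -> u p a b < u p (~~ a) b).
Proof.
have [b0 survb0] := surv_exists k (~~ p).
split=> -[survka nodom]; split=> //.
  by move=> [survna dom]; apply: nodom; exists (~~ a).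
move=> [a' [survka' dom]].
have [a'_eq|a'_neq] := eqVneq a' a.
  by move: (dom b0 survb0); rewrite a'_eq ltxx.
have a'E : a' = ~~ a by clear -a'_neq; move: a'_neq; case: a; case: a'.
by apply: nodom; rewrite -a'E.
Qed.

Lemma survS_best_response k p a b : surv k p a -> surv k (~~ p) b ->
  u p (~~ a) b <= u p a b -> surv k.+1 p a.
Proof.
move=> survka survb le_ab; apply/survS; split=> // -[_ dom].
by move: (dom b survb); rewrite ltNge le_ab.
Qed.

Lemma rationalizable_best_response p a b : rationalizable (~~ p) b ->
  u p (~~ a) b <= u p a b -> rationalizable p a.
Proof.
by move=> ratb le_ab; elim=> // k IHk; apply: survS_best_response (ratb k) le_ab.
Qed.

Lemma rationalizable_weakly_dominant p a : (forall b, u p (~~ a) b <= u p a b) ->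
  rationalizable p a.
Proof.
move=> dom; elim=> // k IHk; have [b survb] := surv_exists k (~~ p).
exact: survS_best_response survb (dom b).
Qed.

Lemma rationalizable_all : (forall p a, exists b, u p (~~ a) b <= u p a b) ->
  forall p a, rationalizable p a.
Proof.
move=> best p a k; elim: k p a => // k IHk p a.
have [b le_ab] := best p a; exact: survS_best_response (IHk _ _) le_ab.
Qed.

Lemma dominated_not_surv1 p a : (forall b, u p a b < u p (~~ a) b) -> ~ surv 1 p a.
Proof. by move=> dom /survS[_]; apply. Qed.

End Rationalizability.

Section EntryGame.
Context {R : realType}.
Variables (alpha eta tau : R) (e : R * R).
Local Notation rationalizable := (rationalizable alpha eta tau e).
Local Notation saa_enters := (saa_enters alpha eta tau e).
Local Notation u := (u alpha eta tau e).

Definition shock (p : bool) : R := if p then e.2 else e.1.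

Lemma u_enter p b : u p true b = alpha + tau + (if b then 0 else eta) - shock p.
Proof. by rewrite /u /profit /shock; case: b; rewrite /= ?subrr ?subr0 ?mulr0 ?mulr1 ?addr0. Qed.

Lemma u_stay p b : u p false b = 0.
Proof. by []. Qed.

Lemma saa_enters_low p : 0 <= eta -> shock p < alpha + tau -> saa_enters p.
Proof.
move=> eta_ge0 low; split.
  by apply: rationalizable_weakly_dominant => b; rewrite u_stay u_enter; case: b; lra.
move=> /(_ 1%N); apply: dominated_not_surv1 => b.
by rewrite u_stay u_enter; case: b; lra.
Qed.

Lemma saa_enters_contested p : 0 <= eta ->
  shock p < alpha + tau + eta -> alpha + tau + eta < shock (~~ p) -> saa_enters p.
Proof.
move=> eta_ge0 lo hi.
have rival_out : rationalizable (~~ p) false.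
  by apply: rationalizable_weakly_dominant => b; rewrite u_stay u_enter; case: b; lra.
have rival_not_in : ~ surv alpha eta tau e 1 (~~ p) true.
  by apply: dominated_not_surv1 => b; rewrite u_stay u_enter; case: b; lra.
have enter : rationalizable p true.
  by apply: rationalizable_best_response rival_out _; rewrite u_stay u_enter; lra.
split=> // /(_ 2%N) /survS[_]; apply; split; first exact: enter.
by case=> // _; rewrite u_stay u_enter; lra.
Qed.

Lemma not_saa_enters_high p : 0 <= eta -> alpha + tau + eta <= shock p -> ~ saa_enters p.
Proof.
move=> eta_ge0 high [_]; apply.
by apply: rationalizable_weakly_dominant => b; rewrite u_stay u_enter; case: b; lra.
Qed.

Lemma not_saa_enters_mid p :
  (forall q, alpha + tau <= shock q <= alpha + tau + eta) -> ~ saa_enters p.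
Proof.
move=> mid [_]; apply; apply: rationalizable_all => q a.
have /andP[lo hi] := mid q.
by exists (~~ a); case: a; rewrite u_stay u_enter /=; lra.
Qed.

End EntryGame.

Lemma not_servedE {R : realType} (alpha eta tau : R) : 0 <= eta ->
  not_served alpha eta tau =
  `[alpha + tau, alpha + tau + eta] `*` `[alpha + tau, alpha + tau + eta] `|`
  `[alpha + tau + eta, +oo[ `*` `[alpha + tau + eta, +oo[.
Proof.
move=> eta_ge0; apply/seteqP; split=> -[e1 e2] /=; rewrite !in_itv /= ?andbT.
- move=> [out1 out2].
  have lo1 : alpha + tau <= e1.
    by rewrite leNgt; apply/negP => /(saa_enters_low alpha eta tau (e1, e2) false eta_ge0).
  have lo2 : alpha + tau <= e2.
    by rewrite leNgt; apply/negP => /(saa_enters_low alpha eta tau (e1, e2) true eta_ge0).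
  have c1 : e1 < alpha + tau + eta -> e2 <= alpha + tau + eta.
    move=> lo; rewrite leNgt; apply/negP => hi; apply: out1.
    exact: (saa_enters_contested alpha eta tau (e1, e2) false eta_ge0).
  have c2 : e2 < alpha + tau + eta -> e1 <= alpha + tau + eta.
    move=> lo; rewrite leNgt; apply/negP => hi; apply: out2.
    exact: (saa_enters_contested alpha eta tau (e1, e2) true eta_ge0).
  rewrite lo1 lo2 /=.
  have [hi1|lo1'] := leP (alpha + tau + eta) e1; have [hi2|lo2'] := leP (alpha + tau + eta) e2.
  + by right.
  + by left; rewrite (ltW lo2') (c2 lo2').
  + by left; rewrite (ltW lo1') (c1 lo1').
  + by left; rewrite (ltW lo1') (ltW lo2').
- case=> [[mid1 mid2]|[hi1 hi2]]; split.
  + by apply: not_saa_enters_mid; case.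
  + by apply: not_saa_enters_mid; case.
  + exact: (not_saa_enters_high alpha eta tau (e1, e2) false eta_ge0).
  + exact: (not_saa_enters_high alpha eta tau (e1, e2) true eta_ge0).
Qed.

Section StandardNormal.
Context {R : realType}.
Local Notation mu := (normal_prob (0:R) 1).
Local Notation pdf := (normal_pdf (0:R) 1).
Local Notation peak := (normal_peak (1:R)).
Local Notation leb := (@lebesgue_measure R).
Local Notation normal2 := (normal_prob (0:R) 1 \x normal_prob (0:R) 1)%E.

Definition nprob (A : set R) : R := fine (mu A).

Lemma normal_probE A : measurable A -> mu A = (nprob A)%:E.
Proof.
move=> mA; rewrite fineK // ge0_fin_numE ?measure_ge0 //.
exact: le_lt_trans (probability_le1 _ mA) (ltry _).
Qed.

Lemma nprob_ge0 A : 0 <= nprob A.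
Proof. exact/fine_ge0/measure_ge0. Qed.

Lemma nprob_le1 A : measurable A -> nprob A <= 1.
Proof. by move=> mA; rewrite -lee_fin -normal_probE // probability_le1. Qed.

Lemma le_nprob A B : measurable A -> measurable B -> A `<=` B -> nprob A <= nprob B.
Proof. by move=> mA mB AB; rewrite -lee_fin -!normal_probE // le_measure ?inE. Qed.

Lemma nprob_setU A B : measurable A -> measurable B -> A `&` B = set0 ->
  nprob (A `|` B) = nprob A + nprob B.
Proof.
move=> mA mB AB; apply/EFin_inj.
by rewrite EFinD -!normal_probE ?measureU //; exact: measurableU.
Qed.

Lemma nprob_itv_split (a x y : itv_bound R) : (a <= x)%O -> (x <= y)%O ->
  nprob [set` Interval a y] = nprob [set` Interval a x] + nprob [set` Interval x y].
Proof.
move=> ax xy; rewrite (itv_bndbnd_setU ax xy) nprob_setU //.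
apply/seteqP; split=> // z [] /=; rewrite !itv_boundlr => /andP[_ zx] /andP[xz _].
by move: zx; rewrite leBRight_ltBLeft => /(le_lt_trans xz); rewrite ltxx.
Qed.

Lemma lebesgue_measure_itv_bnd b1 b2 {a c : R} : a <= c ->
  leb [set` Interval (BSide b1 a) (BSide b2 c)] = (c - a)%:E.
Proof.
rewrite le_eqVlt => /predU1P[<-|ac]; rewrite lebesgue_measure_itv /=.
  by rewrite ltxx subrr.
by rewrite lte_fin ac -EFinD.
Qed.

Lemma in_itv_bnd_le b1 b2 (a c y : R) :
  y \in Interval (BSide b1 a) (BSide b2 c) -> a <= y <= c.
Proof. by rewrite in_itv => /andP[/lteifW -> /lteifW ->]. Qed.

Let measurable_pdf (A : set R) : measurable_fun A (fun y => (pdf y)%:E).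
Proof. by apply/measurable_EFinP; exact: measurable_funTS (measurable_normal_pdf _ _). Qed.

Lemma nprob_itv_le b1 b2 (a c M : R) : a <= c ->
  (forall y, a <= y <= c -> pdf y <= M) ->
  nprob [set` Interval (BSide b1 a) (BSide b2 c)] <= M * (c - a).
Proof.
move=> ac pdfM; rewrite -lee_fin -normal_probE; last exact: measurable_itv.
rewrite EFinM -(lebesgue_measure_itv_bnd b1 b2 ac) -integral_cst; last exact: measurable_itv.
apply: ge0_le_integral => //.
- by move=> y _; rewrite lee_fin normal_pdf_ge0.
- exact: measurable_pdf.
- by move=> y /in_itv_bnd_le /pdfM; rewrite lee_fin.
Qed.

Lemma nprob_itv_ge b1 b2 (a c m : R) : a <= c ->
  (forall y, a <= y <= c -> m <= pdf y) ->
  m * (c - a) <= nprob [set` Interval (BSide b1 a) (BSide b2 c)].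
Proof.
move=> ac mpdf; have [m_lt0|m_ge0] := ltP m 0.
  by apply: le_trans (nprob_ge0 _); rewrite nmulr_rle0 // subr_ge0.
rewrite -lee_fin -normal_probE; last exact: measurable_itv.
rewrite EFinM -(lebesgue_measure_itv_bnd b1 b2 ac) -integral_cst; last exact: measurable_itv.
apply: ge0_le_integral => //.
- exact: measurable_pdf.
- by move=> y /in_itv_bnd_le /mpdf; rewrite lee_fin.
Qed.

Lemma nprob_itvcy (s : R) : nprob `[s, +oo[ = nprob `]s, +oo[.
Proof.
rewrite (@nprob_itv_split _ (BRight s)) ?bnd_simp //.
suff -> : nprob `[s, s] = 0 by rewrite add0r.
apply/eqP; rewrite eq_le nprob_ge0 andbT.
have -> : 0 = peak * (s - s) by rewrite subrr mulr0.
by apply: nprob_itv_le => // y _; exact: normal_pdf_ub (oner_neq0 _).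
Qed.

Lemma normal2X (A B : set R) : measurable A -> measurable B ->
  normal2 (A `*` B) = (nprob A * nprob B)%:E.
Proof. by move=> mA mB; rewrite product_measure1E // EFinM -!normal_probE. Qed.

Definition not_served_mass (eta x : R) : R :=
  nprob `[x, x + eta] ^+ 2 + nprob `]x + eta, +oo[ ^+ 2.

Lemma prob_not_servedE (alpha eta tau : R) : 0 <= eta ->
  prob_not_served alpha eta tau = (not_served_mass eta (alpha + tau))%:E.
Proof.
move=> eta_ge0; rewrite /prob_not_served /std_normal2 not_servedE // /not_served_mass.
set x := alpha + tau; set s := x + eta.
have mI (i : interval R) : measurable [set` i] by exact: measurable_itv.
have mII (i j : interval R) : measurable ([set` i] `*` [set` j]) by exact: measurableX.
(* The two squares meet only at (s, s), which is null. *)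
apply/le_anti/andP; split.
  apply: le_trans (measureU2 normal2 (mII _ _) (mII _ _)) _.
  rewrite -nprob_itvcy EFinD !expr2 -!normal2X //.
have disj : `[x, s] `*` `[x, s] `&` `]s, +oo[ `*` `]s, +oo[ = set0.
  apply/seteqP; split=> // -[y1 y2] [[/= + _] [/= + _]].
  by rewrite !in_itv /= andbT => /andP[_ y1s] /(le_lt_trans y1s); rewrite ltxx.
rewrite EFinD !expr2 -!normal2X; try exact: mI.
rewrite -(measureU normal2 (mII _ _) (mII _ _) disj).
apply: (le_measure normal2); rewrite ?inE; try by apply: measurableU; exact: mII.
apply: setUS => -[y1 y2] [] /=; rewrite !in_itv /= !andbT => /ltW -> /ltW ->.
by split.
Qed.

Lemma normal_pdf01E y : pdf y = peak * expR (- (y ^+ 2) / 2).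
Proof. by rewrite normal_pdfE ?oner_neq0 // /normal_fun subr0 expr1n. Qed.

Lemma normal_peak1_ge : 7 / 20 <= peak.
Proof.
rewrite /normal_peak expr1n mul1r; set q : R := Num.sqrt _.
have pi_lt4 : (pi : R) < 4 by have := @pihalf_lt2 R; lra.
have q_gt0 : 0 < q by rewrite sqrtr_gt0 pmulrn_lgt0 // pi_gt0.
have q_le : q <= 20 / 7.
  have : q ^+ 2 = pi *+ 2 by rewrite sqr_sqrtr // pmulrn_lge0 // pi_ge0.
  rewrite mulr2n; nra.
have qVq : q^-1 * q = 1 by rewrite mulVf // gt_eqF.
nra.
Qed.

Lemma normal_pdf_le c y : c <= y ^+ 2 / 2 -> pdf y <= peak * expR (- c).
Proof.
move=> cy; rewrite normal_pdf01E ler_wpM2l ?normal_peak_ge0 // ler_expR; lra.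
Qed.

Lemma normal_pdf_ge c y : y ^+ 2 / 2 <= c -> peak * expR (- c) <= pdf y.
Proof.
move=> yc; rewrite normal_pdf01E ler_wpM2l ?normal_peak_ge0 // ler_expR; lra.
Qed.

Lemma nprob_slab_ge b1 b2 (a c k : R) : - k <= a -> a <= c -> c <= k ->
  peak * (1 - k ^+ 2 / 2) * (c - a) <= nprob [set` Interval (BSide b1 a) (BSide b2 c)].
Proof.
move=> ka ac ck; apply: nprob_itv_ge => // y /andP[ay yc].
apply: le_trans (normal_pdf_ge (k ^+ 2 / 2) y _); last by nra.
by rewrite ler_wpM2l ?normal_peak_ge0 //; have := expR_ge1Dx (- (k ^+ 2 / 2)); lra.
Qed.

Lemma nprob_left_tail_le (a b : R) : a <= b -> b <= -8 ->
  nprob `[a, b[ <= peak * expR (-32) * (b - a).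
Proof.
move=> ab b_le; apply: nprob_itv_le => // y /andP[_ yb]; apply: (normal_pdf_le 32).
have y8 : 8 <= - y by lra.
have : 8 * 8 <= y ^+ 2 by rewrite -sqrrN expr2; apply: ler_pM.
lra.
Qed.

Lemma nprob_strip_ge (a b : R) : 0 <= a -> a <= b -> b <= 2 ->
  peak * expR (-2) * (b - a) <= nprob `]a, b].
Proof.
move=> a_ge0 ab b_le; apply: nprob_itv_ge => // y /andP[ay yb]; apply: (normal_pdf_ge 2).
have y_ge0 : 0 <= y by lra.
have y_le2 : y <= 2 by lra.
have : y ^+ 2 <= 2 * 2 by rewrite expr2; apply: ler_pM.
lra.
Qed.

Lemma nprob_center : 31 / 61 < nprob `[- (6 / 5), 6 / 5 : R].
Proof.
(* Five slabs give peak * 1.519 >= 0.53. *)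
rewrite (nprob_itv_split _ (BLeft (9 / 10)) _); [|by rewrite bnd_simp; lra..].
rewrite (nprob_itv_split _ (BLeft (1 / 2)) _); [|by rewrite bnd_simp; lra..].
rewrite (nprob_itv_split _ (BLeft (- (1 / 2))) _); [|by rewrite bnd_simp; lra..].
rewrite (nprob_itv_split _ (BLeft (- (9 / 10))) _); [|by rewrite bnd_simp; lra..].
have := @nprob_slab_ge true true (- (6 / 5)) (- (9 / 10)) (6 / 5).
have := @nprob_slab_ge true true (- (9 / 10)) (- (1 / 2)) (9 / 10).
have := @nprob_slab_ge true true (- (1 / 2)) (1 / 2) (1 / 2).
have := @nprob_slab_ge true true (1 / 2) (9 / 10) (9 / 10).
have := @nprob_slab_ge true false (9 / 10) (6 / 5) (6 / 5).
have := normal_peak1_ge.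
lra.
Qed.

End StandardNormal.

Lemma expR_ratio {R : realType} : 31 * expR (-32) <= expR (-2) :> R.
Proof.
have -> : -2 = 30 + -32 :> R by lra.
rewrite expRD; have := expR_ge1Dx (30 : R); have := expR_gt0 (-32 : R).
nra.
Qed.

Lemma sum_sqr_shift_lt {R : realFieldType} (B A D E : R) : 0 <= D -> B + A <= 1 ->
  B * E < D * (2 * B - 1) -> B ^+ 2 + A ^+ 2 < (B + D - E) ^+ 2 + (A - D) ^+ 2.
Proof.
move=> D_ge0 BA key.
have AD : A * D <= (1 - B) * D by apply: ler_wpM2r => //; lra.
nra.
Qed.

Lemma shift_condition_of_ratio {R : realFieldType} {B E D a r t : R} :
  E <= a * r -> a * t <= D -> 31 / 61 < B -> 0 < a -> 0 < r -> 31 * r <= t ->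
  B * E < D * (2 * B - 1).
Proof.
(* B E <= B D / 31 < D (2 B - 1), the last step being B > 31/61. *)
move=> Ear atD B_gt a_gt0 r_gt0 rt.
have BE : B * E <= B * (a * r) by apply: ler_wpM2l => //; lra.
have Dt : a * t * (2 * B - 1) <= D * (2 * B - 1) by apply: ler_wpM2r => //; lra.
have rt2 : a * (31 * r * (2 * B - 1)) <= a * (t * (2 * B - 1)).
  by apply/ler_wpM2l/ler_wpM2r; lra.
have gap : 0 < a * r * (61 * B - 31) by rewrite !mulr_gt0 //; lra.
lra.
Qed.

Lemma not_served_mass_lt {R : realType} (eta x1 x2 : R) :
  52 / 5 < eta < 53 / 5 -> - (91 / 10) < x1 -> x1 < x2 -> x2 < - (43 / 5) ->
  not_served_mass eta x1 < not_served_mass eta x2.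
Proof.
move=> /andP[eta_lo eta_hi] x1_lo x12 x2_hi; rewrite /not_served_mass.
have itv_split := @nprob_itv_split R.
have -> : nprob `[x2, x2 + eta] =
    nprob `[x1, x1 + eta] + nprob `]x1 + eta, x2 + eta] - nprob `[x1, x2[.
  have := itv_split (BLeft x1) (BRight (x1 + eta)) (BRight (x2 + eta)).
  have := itv_split (BLeft x1) (BLeft x2) (BRight (x2 + eta)).
  rewrite !bnd_simp; lra.
have -> : nprob `]x2 + eta, +oo[ = nprob `]x1 + eta, +oo[ - nprob `]x1 + eta, x2 + eta].
  have := itv_split (BRight (x1 + eta)) (BRight (x2 + eta)) +oo%O.
  rewrite !bnd_simp; lra.
apply: sum_sqr_shift_lt; first exact: nprob_ge0.
  rewrite -itv_split; [exact: nprob_le1 (measurable_itv _) | rewrite bnd_simp; lra | by []].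
have B_gt : 31 / 61 < nprob `[x1, x1 + eta].
  apply: (lt_le_trans nprob_center); apply: le_nprob; try exact: measurable_itv.
  by apply: subset_itv; rewrite bnd_simp; lra.
have E_le : nprob `[x1, x2[ <= normal_peak 1 * expR (-32) * (x2 - x1).
  by apply: nprob_left_tail_le; lra.
have D_ge : normal_peak 1 * expR (-2) * (x2 - x1) <= nprob `]x1 + eta, x2 + eta].
  have -> : x2 - x1 = x2 + eta - (x1 + eta) by ring.
  by apply: nprob_strip_ge; lra.
rewrite mulrAC in E_le; rewrite mulrAC in D_ge.
apply: (shift_condition_of_ratio E_le D_ge B_gt _ _ expR_ratio).
  by rewrite mulr_gt0 ?normal_peak_gt0 ?oner_neq0 ?subr_gt0.
exact: expR_gt0.
Qed.

Theorem proposition8 (R : realType) :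
  exists (Xi : set (R * R)) (taubar : R),
    open Xi /\ Xi !=set0 /\ 0 < taubar /\
    forall alpha eta : R, Xi (alpha, eta) ->
      forall tau1 tau2 : R, 0 <= tau1 -> tau1 < tau2 -> tau2 < taubar ->
        (prob_not_served alpha eta tau1 < prob_not_served alpha eta tau2)%E.
Proof.
exists (ball ((-9 : R), (21 / 2 : R)) (1 / 10)), (1 / 10).
split; first exact: ball_open.
split; first by exists ((-9 : R), (21 / 2 : R)); apply: ballxx.
split=> // alpha eta [/= alpha_near eta_near] tau1 tau2 tau1_ge0 tau12 tau2_lt.
move: alpha_near eta_near; rewrite /ball /= !ltr_distlC => /andP[? ?] /andP[? ?].
rewrite !prob_not_servedE; [|lra..]; rewrite lte_fin.
apply: not_served_mass_lt; lra.
Qed.
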